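(* Let $G=N\rtimes G_0$ be a finite group, with $N$ normal in $G$, $G_0$ a subgroup, $N\cap G_0=\{1\}$, $G=NG_0$, and let $M$ be a $\mathbf{Z}[G]$-module with trivial $G$-action. If $\gcd\{|N|,|G_0|\}=1$, then for every $q\ge1$ the map $B_M^q(G)\to B_M^q(N)^{G_0}\times B_M^q(G_0)$ whose components are the restriction maps to $N$ and to $G_0$ is an isomorphism.
   Context: For a finite group $G$, a $\mathbf{Z}[G]$-module $M$ with trivial $G$-action and $q\ge1$, define $B_M^q(G)=\bigcap_A\operatorname{Ker}\{\operatorname{res}_G^A:H^q(G,M)\to H^q(A,M)\}$, where $A$ runs over all bicyclic subgroups of $G$ (a group is bicyclic if it is cyclic or a direct product of two cyclic groups). For $N\lhd G$, $G$ acts on $H^q(N,M)$ by conjugation: for a $q$-cocycle $\alpha$ and $g\in G$, $({}^g\alpha)(\tau_1,\dots,\tau_q)=\alpha(g^{-1}\tau_1g,\dots,g^{-1}\tau_qg)$; this action preserves $B_M^q(N)$, and $B_M^q(N)^{G_0}$ denotes the elements fixed by $G_0$. The restriction maps send $B_M^q(G)$ into $B_M^q(N)^{G_0}$ and into $B_M^q(G_0)$. *)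

From HB Require Import structures.
From mathcomp Require Import all_boot all_order all_algebra all_fingroup all_solvable.
From mathcomp Require Import gproduct cyclic.
Set Implicit Arguments. Unset Strict Implicit. Unset Printing Implicit Defensive.
Import GRing.Theory.
Local Open Scope ring_scope.

(* Inhomogeneous cochain complex of a finite group with coefficients in an
   abelian group M carrying the TRIVIAL action.  A q-cochain is a function
   seq gT -> M, of which only the values on sequences of length q with all
   entries in the relevant subgroup H matter. *)

Section Cohomology.
Variables (gT : finGroupType) (M : zmodType).

Definition cochain := seq gT -> M.

Definition alt_sign (n : nat) (x : M) : M := if odd n then - x else x.

Definition merge_at (i : nat) (s : seq gT) : seq gT :=
  take i s ++ ((nth 1%g s i * nth 1%g s i.+1)%g :: drop i.+2 s).

(* coboundary d : C^n -> C^(n+1), trivial action: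
   (d f)(g_1..g_(n+1)) = f(g_2..g_(n+1))
       + sum_(i=1..n) (-1)^i f(g_1..g_i g_(i+1)..g_(n+1))
       + (-1)^(n+1) f(g_1..g_n) *)
Definition cobound (n : nat) (f : cochain) : cochain := fun s =>
  f (behead s) + \sum_(i < n) alt_sign i.+1 (f (merge_at i s))
  + alt_sign n.+1 (f (take n s)).

Definition tuple_in (H : {set gT}) (n : nat) (s : seq gT) : Prop :=
  size s = n /\ all (fun x => x \in H) s.

Definition is_cocycle (H : {set gT}) (q : nat) (f : cochain) : Prop :=
  forall s, tuple_in H q.+1 s -> cobound q f s = 0.

(* q-coboundary of H, for q >= 1 *)
Definition is_coboundary (H : {set gT}) (q : nat) (f : cochain) : Prop :=
  exists g : cochain, forall s, tuple_in H q s -> f s = cobound q.-1 g s.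

Definition bicyclic (A : {group gT}) : Prop :=
  cyclic A \/ exists B C : {group gT}, [/\ cyclic B, cyclic C & (B \x C)%g = A].

(* the class of the q-cocycle f of H lies in B^q_M(H):
   its restriction to every bicyclic subgroup A of H is zero in H^q(A,M) *)
Definition in_B (H : {group gT}) (q : nat) (f : cochain) : Prop :=
  forall A : {group gT}, A \subset H -> bicyclic A -> is_coboundary A q f.

Definition conj_cochain (g : gT) (f : cochain) : cochain :=
  fun s => f (map (fun t => t ^ g)%g s).

(* the class of f in H^q(N,M) is fixed by every element of G0 *)
Definition fixed_by (N G0 : {group gT}) (q : nat) (f : cochain) : Prop :=
  forall g, g \in G0 -> is_coboundary N q (fun s => conj_cochain g f s - f s).

End Cohomology.

From HB Require Import structures.
From mathcomp Require Import all_boot all_order all_algebra all_fingroup all_solvable.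
From mathcomp Require Import gproduct cyclic.
Import GRing.Theory.
Local Open Scope ring_scope.
Set Implicit Arguments. Unset Strict Implicit. Unset Printing Implicit Defensive.

(* Corestriction after restriction to H <= A is multiplication by [A : H] on H^q(A, M).
   Hence a class of G vanishing on N and on G0 is killed by [G : N] = |G0| and by
   [G : G0] = |N|, which are coprime, so it vanishes.  Conversely, with
   u |N| + v |G0| = 1, the pair (b, c) is the restriction of Cor_N^G (v b) + Inf (u |N| c):
   on N the corestriction is the sum of the G0-conjugates of v b, i.e. |G0| v b, and the
   inflation is trivial; on G0 the corestriction factors through N :&: G0 = 1 and the
   inflation is u |N| c.  The B-conditions follow because intersecting with N and
   projecting onto G0 keep subgroups bicyclic.  All identities are established on
   cochains, comparing with homogeneous cochains and using prism homotopies. *)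

Section AlternatingSums.
Variables (T : Type) (M : zmodType).
Implicit Types (F G : seq T -> M) (u v w : seq T).

Lemma alt_signS n (z : M) : alt_sign n.+1 z = - alt_sign n z.
Proof. by rewrite /alt_sign /=; case: (odd n); rewrite ?opprK. Qed.

Lemma alt_signD n (z1 z2 : M) : alt_sign n (z1 + z2) = alt_sign n z1 + alt_sign n z2.
Proof. by rewrite /alt_sign; case: (odd n); rewrite ?opprD. Qed.

Lemma alt_signN n (z : M) : alt_sign n (- z) = - alt_sign n z.
Proof. by rewrite /alt_sign; case: (odd n). Qed.

Lemma alt_signB n (z1 z2 : M) : alt_sign n (z1 - z2) = alt_sign n z1 - alt_sign n z2.
Proof. by rewrite alt_signD alt_signN. Qed.

Lemma alt_signMz n (z : M) k : alt_sign n (z *~ k) = alt_sign n z *~ k.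
Proof. by rewrite /alt_sign; case: (odd n); rewrite ?mulNrz. Qed.

Lemma alt_sign_sum I (r : seq I) (P : pred I) (E : I -> M) n :
  alt_sign n (\sum_(i <- r | P i) E i) = \sum_(i <- r | P i) alt_sign n (E i).
Proof. by rewrite /alt_sign; case: (odd n); rewrite ?sumrN. Qed.

Lemma sum_alt_sign_const k (z : M) :
  \sum_(i < k) alt_sign i z = if odd k then z else 0.
Proof.
elim: k => [|k IHk]; first by rewrite big_ord0.
by rewrite big_ord_recr /= IHk /alt_sign; case: (odd k); rewrite /= ?subrr ?add0r.
Qed.

Definition rem_at (i : nat) w := take i w ++ drop i.+1 w.

Lemma rem_at0 a w : rem_at 0 (a :: w) = w.
Proof. by rewrite /rem_at /= drop0. Qed.

Lemma rem_atS i a w : rem_at i.+1 (a :: w) = a :: rem_at i w.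
Proof. by []. Qed.

Lemma all_rem_at (P : pred T) i w : all P w -> all P (rem_at i w).
Proof.
move=> Pw; rewrite /rem_at all_cat; apply/andP; split.
  by rewrite -(cat_take_drop i w) all_cat in Pw; case/andP: Pw.
by rewrite -(cat_take_drop i.+1 w) all_cat in Pw; case/andP: Pw.
Qed.

(* The differential of homogeneous cochains, i.e. of functions of q+1 points. *)
Definition hdiff F w : M := \sum_(0 <= j < size w) alt_sign j (F (rem_at j w)).

Lemma hdiff_cons F a w : hdiff F (a :: w) = F w - hdiff (fun y => F (a :: y)) w.
Proof.
rewrite /hdiff /= big_nat_recl // rem_at0 -sumrN; congr (_ + _).
by apply: eq_bigr => j _; rewrite rem_atS alt_signS.
Qed.

Lemma hdiff_sum I (r : seq I) (P : pred I) (E : I -> seq T -> M) w :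
  hdiff (fun y => \sum_(i <- r | P i) E i y) w = \sum_(i <- r | P i) hdiff (E i) w.
Proof. by rewrite /hdiff exchange_big; apply: eq_bigr => j _; apply: alt_sign_sum. Qed.

Lemma eq_in_hdiff F G w :
  (forall j, (j < size w)%N -> F (rem_at j w) = G (rem_at j w)) -> hdiff F w = hdiff G w.
Proof.
move=> eqFG; rewrite /hdiff big_nat_cond [RHS]big_nat_cond.
by apply: eq_bigr => j /andP[/andP[_ lt_jw] _]; rewrite eqFG.
Qed.

Definition hdiff2 (H : seq T -> seq T -> M) u v : M :=
  \sum_(0 <= j < size u) alt_sign j (H (rem_at j u) (rem_at j v)).

Lemma hdiff2_cons H a b u v :
  hdiff2 H (a :: u) (b :: v) = H u v - hdiff2 (fun x y => H (a :: x) (b :: y)) u v.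
Proof.
rewrite /hdiff2 /= big_nat_recl // !rem_at0 -sumrN; congr (_ + _).
by apply: eq_bigr => j _; rewrite !rem_atS alt_signS.
Qed.

Lemma hdiff2B H1 H2 u v :
  hdiff2 (fun x y => H1 x y - H2 x y) u v = hdiff2 H1 u v - hdiff2 H2 u v.
Proof. by rewrite /hdiff2 -sumrB; apply: eq_bigr => j _; rewrite alt_signB. Qed.

Lemma hdiff2_r F u v : size u = size v -> hdiff2 (fun _ y => F y) u v = hdiff F v.
Proof. by move=> eq_uv; rewrite /hdiff2 /hdiff eq_uv. Qed.

(* The prism operator: a chain homotopy between the two cochain maps induced by
   u and v, built from the simplices [u_0; ...; u_i; v_i; ...; v_n]. *)
Fixpoint prism F u v : M :=
  if (u, v) is (a :: u', b :: v') then F (a :: b :: v') - prism (fun y => F (a :: y)) u' v'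
  else 0.

Lemma prismB F G u v : prism (fun y => F y - G y) u v = prism F u v - prism G u v.
Proof.
elim: u F G v => [|a u IHu] F G [|b v] /=; rewrite ?subr0 //.
rewrite (IHu (fun y => F (a :: y)) (fun y => G (a :: y))) !opprB.
by rewrite addrACA [RHS]addrACA [- G _ + _]addrC.
Qed.

Lemma eq_prism F G u v : F =1 G -> prism F u v = prism G u v.
Proof.
elim: u F G v => [|a u IHu] F G [|b v] //= eqFG.
by rewrite eqFG (IHu _ (fun y => G (a :: y))).
Qed.

Lemma prism_eq0 (P : pred T) F u v :
  (forall w, size w = (size u).+1 -> all P w -> F w = 0) ->
  all P u -> all P v -> size u = size v -> prism F u v = 0.
Proof.
elim: u F v => [|a u IHu] F [|b v] //= F0 /andP[Pa Pu] /andP[Pb Pv] [eq_uv].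
rewrite F0 /= ?eq_uv ?Pa ?Pb ?Pv // (IHu (fun y => F (a :: y))) ?subrr // => w sz_w Pw.
by apply: F0; rewrite /= ?sz_w ?Pa.
Qed.

Lemma prism_homotopy F u v :
  size u = size v -> hdiff2 (prism F) u v + prism (hdiff F) u v = F v - F u.
Proof.
elim: u F v => [|a u IHu] F [|b v] //=; first by rewrite /hdiff2 big_geq // add0r subrr.
move=> [eq_uv]; rewrite hdiff2_cons.
have -> : hdiff2 (fun x y => prism F (a :: x) (b :: y)) u v =
          hdiff (fun y => F (a :: b :: y)) v - hdiff2 (prism (fun y => F (a :: y))) u v.
  by rewrite -(hdiff2_r _ eq_uv) -hdiff2B.
rewrite (eq_prism (F := fun y => hdiff F (a :: y))
                  (G := fun y => F y - hdiff (fun z => F (a :: z)) y)); last first.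
  by move=> y; rewrite hdiff_cons.
rewrite prismB !hdiff_cons -/(hdiff _ _).
have IHa := IHu (fun y => F (a :: y)) v eq_uv.
set P := prism F u v; set D := hdiff _ v; set E := hdiff2 _ u v.
have -> : prism (hdiff (fun z => F (a :: z))) u v = F (a :: v) - F (a :: u) - E.
  by rewrite -IHa addrC addKr.
set X := F (a :: v); set Y := F (a :: u); set W := F (b :: v).
rewrite !opprB !addrA subrK (addrAC _ (- D) W) subrK.
rewrite (addrAC _ (- Y) (- E)) (addrAC _ W (- E)) addrK.
by rewrite (addrAC _ (- Y) (- P)) (addrAC P W (- P)) subrr add0r.
Qed.

End AlternatingSums.

Lemma map_rem_at (T S : Type) (f : T -> S) i (w : seq T) :
  map f (rem_at i w) = rem_at i (map f w).
Proof. by rewrite /rem_at map_cat map_take map_drop. Qed.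

Lemma hdiff_map (T S : Type) (M : zmodType) (f : S -> T) (F : seq T -> M) (z : seq S) :
  hdiff (fun y => F (map f y)) z = hdiff F (map f z).
Proof. by rewrite /hdiff size_map; apply: eq_bigr => j _; rewrite map_rem_at. Qed.

Lemma hdiff2_map (T : Type) (M : zmodType) (f g : T -> T) (H : seq T -> seq T -> M) x :
  hdiff2 H (map f x) (map g x) = hdiff (fun y => H (map f y) (map g y)) x.
Proof. by rewrite /hdiff2 /hdiff size_map; apply: eq_bigr => j _; rewrite !map_rem_at. Qed.

Lemma hdiff2_mapr (T : Type) (M : zmodType) (g : T -> T) (H : seq T -> seq T -> M) x :
  hdiff2 H x (map g x) = hdiff (fun y => H y (map g y)) x.
Proof. by rewrite /hdiff2 /hdiff; apply: eq_bigr => j _; rewrite map_rem_at. Qed.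

Lemma prism_map (T : Type) (M : zmodType) (f : T -> T) (F G : seq T -> M) u v :
  (forall w, F (map f w) = G w) -> prism F (map f u) (map f v) = prism G u v.
Proof.
elim: u F G v => [|a u IHu] F G [|b v] //= FG.
by rewrite -(FG (a :: b :: v)) (IHu _ (fun y => G (a :: y))) // => w; rewrite -FG.
Qed.

(* Homogeneous cochains live on sequences of q+1 points and are compared with the
   inhomogeneous cochains seen by [cobound] through the mutually inverse maps
   [g_1; ...; g_q] |-> [1; g_1; g_1 g_2; ...] and [x_0; ...; x_q] |-> [x_0^-1 x_1; ...]. *)
Section HomogeneousCochains.
Variables (gT : finGroupType) (M : zmodType).
Implicit Types (f K : seq gT -> M) (s x : seq gT).

Fixpoint partial_prods s : seq gT :=
  if s is a :: s' then 1%g :: map ( *%g a) (partial_prods s') else [:: 1%g].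

Definition steps x : seq gT :=
  if x is x0 :: xs then pairmap (fun a b => a^-1 * b)%g x0 xs else [::].

Definition homog f x : M := f (steps x).
Definition inhomog K s : M := K (partial_prods s).

Definition left_invariant (A : {set gT}) K :=
  forall g x, g \in A -> all (mem A) x -> K (map ( *%g g) x) = K x.

Lemma size_partial_prods s : size (partial_prods s) = (size s).+1.
Proof. by elim: s => //= a s IHs; rewrite size_map IHs. Qed.

Lemma size_steps x : size (steps x) = (size x).-1.
Proof. by case: x => //= a x; rewrite size_pairmap. Qed.

Lemma steps_mulg g x : steps (map ( *%g g) x) = steps x.
Proof.
case: x => //= a x; elim: x a => //= b x IHx a.
by rewrite IHx invMg -mulgA mulKg.
Qed.

Lemma steps_mulgr g x : steps (map (fun z => z * g)%g x) = map (conjg^~ g) (steps x).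
Proof.
case: x => //= a x; elim: x a => //= b x IHx a.
by rewrite IHx invMg /conjg !mulgA.
Qed.

Lemma steps_conjg g x : steps (map (conjg^~ g) x) = map (conjg^~ g) (steps x).
Proof.
case: x => //= a x; elim: x a => //= b x IHx a.
by rewrite IHx conjMg conjVg.
Qed.

Lemma partial_prodsK : cancel partial_prods steps.
Proof.
elim=> //= a s IHs; have := steps_mulg a (partial_prods s); rewrite IHs.
have [r ->] : exists r, partial_prods s = 1%g :: r by case: s {IHs} => [|b s]; eexists.
by rewrite /= => <-; rewrite invg1 mul1g mulg1.
Qed.

Lemma steps_nseq1 k : steps (nseq k.+1 (1%g : gT)) = nseq k 1%g.
Proof. by elim: k => // k; rewrite /steps /= => ->; rewrite invg1 mulg1. Qed.

Lemma partial_prods_steps a x : partial_prods (steps (a :: x)) = map ( *%g a^-1) (a :: x).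
Proof.
elim: x a => [|b x IHx] a /=; first by rewrite mulVg.
rewrite mulVg IHx /= mulVg mulg1 -map_comp; congr [:: _, _ & _].
by apply: eq_map => z /=; rewrite !mulgA mulgK.
Qed.

Lemma all_partial_prods (A : {group gT}) s : all (mem A) s -> all (mem A) (partial_prods s).
Proof.
elim: s => [|a s IHs] /=; first by rewrite group1.
case/andP=> Aa As; rewrite group1 all_map; apply/allP => z zs /=.
by rewrite groupM //; apply: (allP (IHs As)).
Qed.

Lemma all_steps (A : {group gT}) x : all (mem A) x -> all (mem A) (steps x).
Proof.
case: x => //= a x; elim: x a => //= b x IHx a /andP[Aa /andP[Ab Ax]].
by rewrite groupM ?groupV //= IHx //= Ab.
Qed.

Lemma merge_at0 a b s : merge_at 0 [:: a, b & s] = (a * b)%g :: s.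
Proof. by rewrite /merge_at /= drop0. Qed.

Lemma merge_atS i a s : merge_at i.+1 (a :: s) = a :: merge_at i s.
Proof. by []. Qed.

Lemma rem_at_partial_prods i s :
  (i.+1 < size s)%N -> rem_at i.+1 (partial_prods s) = partial_prods (merge_at i s).
Proof.
elim: s i => [|a s IHs] [|i] //.
  case: s {IHs} => [|b s] //= _; rewrite drop0 rem_atS rem_at0 -map_comp.
  by congr (_ :: _); apply: eq_map => z /=; rewrite mulgA.
by move=> lt_i; rewrite merge_atS /= rem_atS -map_rem_at IHs.
Qed.

Lemma take_partial_prods k s : take k.+1 (partial_prods s) = partial_prods (take k s).
Proof.
elim: s k => [|a s IHs] [|k] //=; first by rewrite take0.
by rewrite -map_take IHs.
Qed.

Lemma hdiff_partial_prods (A : {group gT}) K q s :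
  left_invariant A K -> tuple_in A q.+1 s ->
  hdiff K (partial_prods s) = cobound q (inhomog K) s.
Proof.
move=> invK [sz_s]; case: s sz_s => [|a s] // [<-] /andP[Aa As].
rewrite /hdiff /cobound size_partial_prods big_nat_recl // rem_at0.
rewrite invK ?all_partial_prods // -addrA; congr (_ + _).
rewrite big_nat_recr // big_mkord; congr (_ + _).
  by apply: eq_bigr => i _; rewrite rem_at_partial_prods //= ltnS.
rewrite /rem_at drop_oversize ?cats0; last by rewrite size_partial_prods.
by rewrite take_partial_prods.
Qed.

Lemma homog_invariant f : left_invariant [set: gT] (homog f).
Proof. by move=> g x _ _; rewrite /homog steps_mulg. Qed.

Lemma inhomog_homog f : inhomog (homog f) =1 f.
Proof. by move=> s; rewrite /inhomog /homog partial_prodsK. Qed.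

Lemma hdiff_invariant (A : {set gT}) K : left_invariant A K -> left_invariant A (hdiff K).
Proof.
move=> invK g x Ag Ax; rewrite -hdiff_map; apply: eq_in_hdiff => j _.
by rewrite /= invK // all_rem_at.
Qed.

Lemma eq_cobound n f1 f2 s : f1 =1 f2 -> cobound n f1 s = cobound n f2 s.
Proof.
by move=> eq_f; rewrite /cobound !eq_f; congr (_ + _ + _); apply: eq_bigr => i _; rewrite eq_f.
Qed.

Lemma hdiff_homog f q x : size x = q.+2 -> hdiff (homog f) x = cobound q f (steps x).
Proof.
case: x => [|a x] // [sz_x].
have setTx : all (mem [set: gT]) (a :: x) by apply/allP => z _; rewrite inE.
rewrite -(hdiff_invariant (@homog_invariant f) (g := (a^-1)%g)) ?inE //.
rewrite -partial_prods_steps (hdiff_partial_prods (A := [set: gT]) (q := q)).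
- exact/eq_cobound/inhomog_homog.
- exact: homog_invariant.
by split; [rewrite size_steps /= sz_x | apply/allP => z _; rewrite inE].
Qed.

End HomogeneousCochains.

Section CochainAlgebra.
Variables (gT : finGroupType) (M : zmodType).
Implicit Types (f g : seq gT -> M) (s : seq gT).

Lemma coboundD n f1 f2 s :
  cobound n (fun w => f1 w + f2 w) s = cobound n f1 s + cobound n f2 s.
Proof.
rewrite /cobound alt_signD; under eq_bigr do rewrite alt_signD.
rewrite big_split /=; set a1 := f1 _; set b1 := \sum_(i < n) _.
by rewrite (addrACA a1 (f2 _) b1) (addrACA (a1 + b1)).
Qed.

Lemma coboundMz n f k s : cobound n (fun w => f w *~ k) s = cobound n f s *~ k.
Proof.
rewrite /cobound alt_signMz !mulrzDl mulrz_suml; congr (_ + _ + _).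
by apply: eq_bigr => i _; rewrite alt_signMz.
Qed.

Lemma coboundMn n f k s : cobound n (fun w => f w *+ k) s = cobound n f s *+ k.
Proof. by rewrite pmulrn -coboundMz; apply: eq_cobound => w; rewrite pmulrn. Qed.

Lemma cobound_const n (c : M) s : cobound n (fun _ => c) s = if odd n then c else 0.
Proof.
have := sum_alt_sign_const n.+2 c.
by rewrite big_ord_recr big_ord_recl /= negbK.
Qed.

Lemma cobound0 n s : cobound n (fun _ => (0 : M)) s = 0.
Proof. by rewrite cobound_const if_same. Qed.

Lemma merge_at_nseq1 i n : (i < n)%N -> merge_at i (nseq n.+1 (1%g : gT)) = nseq n 1%g.
Proof.
elim: n i => [|n IHn] [|i] //=; first by rewrite merge_at0 mulg1.
by rewrite ltnS => lt_in; rewrite merge_atS IHn.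
Qed.

Lemma cobound_nseq1 n f :
  cobound n f (nseq n.+1 1%g) = if odd n then f (nseq n 1%g) else 0.
Proof.
rewrite -(cobound_const n _ (nseq n.+1 1%g)) /cobound /=; congr (_ + _ + _).
  by apply: eq_bigr => i _; rewrite merge_at_nseq1.
by congr (alt_sign _ (f _)); elim: n {f} => //= n ->.
Qed.

Lemma cobound_map (pi : gT -> gT) (D : {set gT}) n f s :
  {in D &, {morph pi : x y / x * y}%g} -> all (mem D) s -> size s = n.+1 ->
  cobound n (fun w => f (map pi w)) s = cobound n f (map pi s).
Proof.
move=> piM Ds sz_s; rewrite /cobound behead_map map_take; congr (_ + _ + _).
apply: eq_bigr => i _; have lt_is : (i.+1 < size s)%N by rewrite sz_s ltnS.
rewrite /merge_at map_cat map_take /= map_drop !(nth_map 1%g) ?piM //; try exact: ltnW.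
by apply: (allP Ds); apply: mem_nth; apply: ltnW.
by apply: (allP Ds); apply: mem_nth.
Qed.

Variable A : {set gT}.

Lemma coboundary_ext q f1 f2 : (forall s, tuple_in A q s -> f1 s = f2 s) ->
  is_coboundary A q f1 -> is_coboundary A q f2.
Proof. by move=> eq_f [g Dg]; exists g => s As; rewrite -eq_f // Dg. Qed.

Lemma coboundary0 q : is_coboundary A q (fun _ => (0 : M)).
Proof. by exists (fun _ => 0) => s _; rewrite cobound0. Qed.

Lemma coboundaryD q f1 f2 : is_coboundary A q f1 -> is_coboundary A q f2 ->
  is_coboundary A q (fun s => f1 s + f2 s).
Proof.
by move=> [g1 Dg1] [g2 Dg2]; exists (fun w => g1 w + g2 w) => s As; rewrite coboundD Dg1 ?Dg2.
Qed.

Lemma coboundaryMz q f k : is_coboundary A q f -> is_coboundary A q (fun s => f s *~ k).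
Proof. by move=> [g Dg]; exists (fun w => g w *~ k) => s As; rewrite coboundMz Dg. Qed.

Lemma coboundaryMn q f k : is_coboundary A q f -> is_coboundary A q (fun s => f s *+ k).
Proof. by move=> [g Dg]; exists (fun w => g w *+ k) => s As; rewrite coboundMn Dg. Qed.

Lemma coboundary_sum q I (r : seq I) (P : pred I) (E : I -> seq gT -> M) :
  (forall i, P i -> is_coboundary A q (E i)) ->
  is_coboundary A q (fun s => \sum_(i <- r | P i) E i s).
Proof.
move=> cobE; elim: r => [|i r IHr].
  by apply: coboundary_ext (coboundary0 q) => s _; rewrite big_nil.
case Pi: (P i); last by apply: coboundary_ext IHr => s _; rewrite big_cons Pi.
by apply: coboundary_ext (coboundaryD (cobE i Pi) IHr) => s _; rewrite big_cons Pi.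
Qed.

Lemma coboundary_coprime q f k1 k2 : coprime k1 k2 ->
  is_coboundary A q (fun s => f s *+ k1) -> is_coboundary A q (fun s => f s *+ k2) ->
  is_coboundary A q f.
Proof.
move=> co_k cob1 cob2; have [u [v Duv]] := Bezoutz k1 k2.
have gcd1 : gcdz k1 k2 = 1 by rewrite /gcdz /= (eqP co_k).
apply: coboundary_ext (coboundaryD (coboundaryMz u cob1) (coboundaryMz v cob2)) => s _.
by rewrite !pmulrn !mulrzA_C -mulrzDr Duv gcd1 mulr1z.
Qed.

Lemma cocycleD q f1 f2 : is_cocycle A q f1 -> is_cocycle A q f2 ->
  is_cocycle A q (fun s => f1 s + f2 s).
Proof. by move=> cf1 cf2 s As; rewrite coboundD cf1 ?cf2 ?addr0. Qed.

Lemma cocycleMz q f k : is_cocycle A q f -> is_cocycle A q (fun s => f s *~ k).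
Proof. by move=> cf s As; rewrite coboundMz cf ?mul0rz. Qed.

Lemma cocycleMn q f k : is_cocycle A q f -> is_cocycle A q (fun s => f s *+ k).
Proof. by move=> cf s As; rewrite coboundMn cf ?mul0rn. Qed.

End CochainAlgebra.

Lemma tuple_inS (gT : finGroupType) (A B : {set gT}) q s :
  A \subset B -> tuple_in A q s -> tuple_in B q s.
Proof. by move=> sAB [sz_s As]; split=> //; apply: sub_all As => z; apply: (subsetP sAB). Qed.

Lemma coboundaryS (gT : finGroupType) (M : zmodType) (A B : {set gT}) q (f : seq gT -> M) :
  A \subset B -> is_coboundary B q f -> is_coboundary A q f.
Proof. by move=> sAB [g Dg]; exists g => s As; apply/Dg/(tuple_inS sAB). Qed.

Lemma cocycleS (gT : finGroupType) (M : zmodType) (A B : {set gT}) q (f : seq gT -> M) :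
  A \subset B -> is_cocycle B q f -> is_cocycle A q f.
Proof. by move=> sAB cf s As; apply/cf/(tuple_inS sAB). Qed.

Lemma in_BS (gT : finGroupType) (M : zmodType) (A B : {group gT}) q (f : seq gT -> M) :
  A \subset B -> in_B B q f -> in_B A q f.
Proof. by move=> sAB fB C sCA; apply/fB/(subset_trans sCA). Qed.

(* In odd degree the cocycle condition at (1, ..., 1) forces f (1, ..., 1) = 0; in even
   positive degree the constant cochain is the coboundary of a constant. *)
Lemma coboundary_const (gT : finGroupType) (M : zmodType) (A B : {group gT}) q
    (f : seq gT -> M) :
  (0 < q)%N -> is_cocycle B q f -> is_coboundary A q (fun _ => f (nseq q 1%g)).
Proof.
move=> q_gt0 cf; case odd_q: (odd q).
  have : cobound q f (nseq q.+1 1%g) = 0.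
    by apply: cf; split; rewrite ?size_nseq //; apply/allP => z /nseqP[-> _]; apply: group1.
  by rewrite cobound_nseq1 odd_q => ->; apply: coboundary0.
exists (fun _ => f (nseq q 1%g)) => s _; rewrite cobound_const.
by case: q q_gt0 odd_q {cf} => //= q _ /negbFE ->.
Qed.

(* Corestriction, computed on homogeneous cochains with a right transversal T of H in A:
   rho y is the representative of H y and y = hpart rho y * rho y. *)
Section Corestriction.
Variables (gT : finGroupType) (M : zmodType).
Implicit Types (f g F : seq gT -> M) (s x : seq gT).

Definition hpart (rho : gT -> gT) (y : gT) : gT := (y * (rho y)^-1)%g.

Definition is_transversal (A H T : {set gT}) (rho : gT -> gT) : Prop :=
  H \subset A /\ [/\ T \subset A, {in A, forall y, rho y \in T},
      {in A, forall y, hpart rho y \in H},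
      {in H & A, forall h y, rho (h * y)%g = rho y} & {in T, forall t, rho t = t}].

Definition transfer_sum (T : {set gT}) rho (W : seq gT -> seq gT -> M) x : M :=
  \sum_(t in T) W (map (fun z => hpart rho (t * z)%g) x) (map ( *%g t) x).

Definition cores_homog T rho F x : M := transfer_sum T rho (fun u _ => F u) x.

Definition cores T rho f : seq gT -> M := inhomog (cores_homog T rho (homog f)).

Lemma coresMn T rho f k s : cores T rho (fun w => f w *+ k) s = cores T rho f s *+ k.
Proof. by rewrite /cores /inhomog /cores_homog /transfer_sum /homog -sumrMnl. Qed.

Lemma reindex_in (T : {set gT}) (sg : gT -> gT) (Phi : gT -> M) :
  {in T, forall t, sg t \in T} -> {in T &, injective sg} ->
  \sum_(t in T) Phi (sg t) = \sum_(t in T) Phi t.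
Proof.
move=> sgT sg_inj; rewrite -big_imset //; suff -> : sg @: T = T by [].
apply/eqP; rewrite eqEcard card_in_imset // leqnn andbT.
by apply/subsetP => _ /imsetP[t tT ->]; apply: sgT.
Qed.

Variables (A H : {group gT}) (T : {set gT}) (rho : gT -> gT).
Hypothesis trT : is_transversal A H T rho.

Lemma hpartMl h z : h \in H -> z \in A -> hpart rho (h * z)%g = (h * hpart rho z)%g.
Proof. by case: trT => _ [_ _ _ rhoM _] hH zA; rewrite /hpart rhoM // mulgA. Qed.

Lemma all_hpart t x :
  t \in T -> all (mem A) x -> all (mem H) (map (fun z => hpart rho (t * z)%g) x).
Proof.
case: trT => _ [sTA _ hpartH _ _] tT Ax; apply/allP => _ /mapP[z zx ->].
have zA : z \in A := allP Ax z zx.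
by apply: hpartH; rewrite groupM // (subsetP sTA).
Qed.

Lemma all_mulT t x : t \in T -> all (mem A) x -> all (mem A) (map ( *%g t) x).
Proof.
case: trT => _ [sTA _ _ _ _] tT Ax; apply/allP => _ /mapP[z zx ->].
have zA : z \in A := allP Ax z zx.
by apply: groupM => //; apply: (subsetP sTA).
Qed.

(* Right multiplication by g in A permutes the cosets H t, t in T, which reindexes the sum. *)
Lemma transfer_sum_invariant W :
  (forall h u v, h \in H -> W (map ( *%g h) u) (map ( *%g h) v) = W u v) ->
  left_invariant A (transfer_sum T rho W).
Proof.
move=> invW g x Ag Ax; case: (trT) => sHA [sTA rhoT hpartH rhoM rho_id].
rewrite /transfer_sum -[RHS](reindex_in (sg := fun t => rho (t * g)%g)); first last.
- move=> t1 t2 t1T t2T /= eq_rho.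
  have [t1A t2A] : t1 \in A /\ t2 \in A by rewrite !(subsetP sTA).
  have D_t1 : t1 = (hpart rho (t1 * g) * (hpart rho (t2 * g))^-1 * t2)%g.
    by rewrite /hpart eq_rho invMg invgK !mulgA mulgKV invMg !mulgA mulgK mulgKV.
  rewrite -(rho_id t1) // D_t1 rhoM ?rho_id // groupM ?groupV ?hpartH ?groupM //.
- by move=> t tT; apply: rhoT; rewrite groupM // (subsetP sTA).
apply: eq_bigr => t tT; have tA : t \in A by apply: (subsetP sTA).
have tgA : (t * g)%g \in A by rewrite groupM.
set h := hpart rho (t * g)%g; have hH : h \in H by apply: hpartH.
have D_tg : (t * g = h * rho (t * g))%g by rewrite /h /hpart mulgKV.
rewrite -[RHS](invW h) // -!map_comp; congr W; apply/eq_in_map => z zx /=.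
  have zA : z \in A := allP Ax z zx.
  rewrite mulgA {1}D_tg -mulgA; apply: hpartMl => //.
  by rewrite groupM // (subsetP sTA) ?rhoT.
by rewrite mulgA {1}D_tg mulgA.
Qed.

Lemma cores_homog_invariant F :
  (forall h u, F (map ( *%g h) u) = F u) -> left_invariant A (cores_homog T rho F).
Proof. by move=> invF; apply: transfer_sum_invariant => h u v _; apply: invF. Qed.

Lemma hdiff_cores_homog F x :
  hdiff (cores_homog T rho F) x = \sum_(t in T) hdiff F (map (fun z => hpart rho (t * z)%g) x).
Proof.
by rewrite /cores_homog /transfer_sum hdiff_sum; apply: eq_bigr => t _; rewrite -hdiff_map.
Qed.

Lemma hdiff_homog_transfer f q t s : t \in T -> tuple_in A q.+1 s ->
  hdiff (homog f) (map (fun z => hpart rho (t * z)%g) (partial_prods s)) =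
  cobound q f (steps (map (fun z => hpart rho (t * z)%g) (partial_prods s))) /\
  tuple_in H q.+1 (steps (map (fun z => hpart rho (t * z)%g) (partial_prods s))).
Proof.
move=> tT [sz_s As]; rewrite (@hdiff_homog _ _ _ q) ?size_map ?size_partial_prods ?sz_s //.
split=> //; split; first by rewrite size_steps size_map size_partial_prods sz_s.
by apply/all_steps/all_hpart/all_partial_prods.
Qed.

Lemma cores_cobound q f g : (forall s, tuple_in H q.+1 s -> f s = cobound q g s) ->
  forall s, tuple_in A q.+1 s -> cores T rho f s = cobound q (cores T rho g) s.
Proof.
move=> Df s As; rewrite /cores -(hdiff_partial_prods (A := A)) //; last first.
  by apply: cores_homog_invariant => h u; rewrite /homog steps_mulg.
rewrite hdiff_cores_homog /inhomog /cores_homog /transfer_sum; apply: eq_bigr => t tT.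
by have [-> /Df] := hdiff_homog_transfer g tT As.
Qed.

Lemma cores_cocycle q f : is_cocycle H q f -> is_cocycle A q (cores T rho f).
Proof.
move=> cf s As; rewrite /cores -(hdiff_partial_prods (A := A)) //; last first.
  by apply: cores_homog_invariant => h u; rewrite /homog steps_mulg.
rewrite hdiff_cores_homog big1 // => t tT.
by have [-> /cf] := hdiff_homog_transfer f tT As.
Qed.

(* The prism homotopy between the two cochain maps u |-> hpart(t u) and u |-> t u
   shows that corestriction after restriction is multiplication by |T| = [A : H]. *)
Lemma res_cores_cobound q f : is_cocycle A q.+1 f ->
  forall s, tuple_in A q.+1 s ->
    f s *+ #|T| - cores T rho f s = cobound q (inhomog (transfer_sum T rho (prism (homog f)))) s.
Proof.
move=> cf s As; have [sz_s As'] := As.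
rewrite -(hdiff_partial_prods (A := A)) //; last first.
  by apply: transfer_sum_invariant => h u v _; apply: prism_map => w; rewrite /homog steps_mulg.
rewrite /transfer_sum hdiff_sum /cores /inhomog /cores_homog /transfer_sum.
rewrite -(inhomog_homog f s) /inhomog -sumr_const -sumrB; apply: eq_bigr => t tT.
rewrite -hdiff2_map.
have -> : homog f (partial_prods s) = homog f (map ( *%g t) (partial_prods s)).
  by rewrite /homog steps_mulg.
rewrite -prism_homotopy ?size_map // (prism_eq0 (P := mem A)) ?addr0 ?size_map //.
- move=> w sz_w Aw; rewrite (@hdiff_homog _ _ _ q.+1); last first.
    by rewrite sz_w ?size_map size_partial_prods sz_s.
  apply: cf; split; last exact: all_steps.
  by rewrite size_steps sz_w ?size_map size_partial_prods sz_s.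
- case: (trT) => sHA _; apply: sub_all (all_hpart tT (all_partial_prods As')) => z.
  exact: (subsetP sHA).
- exact/all_mulT/all_partial_prods.
Qed.

Lemma cores_coboundary q f : is_coboundary H q.+1 f -> is_coboundary A q.+1 (cores T rho f).
Proof. by move=> [g Dg]; exists (cores T rho g) => s As; rewrite (cores_cobound Dg). Qed.

Lemma coboundary_transversal_card q f : is_cocycle A q.+1 f -> is_coboundary H q.+1 f ->
  is_coboundary A q.+1 (fun s => f s *+ #|T|).
Proof.
move=> cf cobf.
have cob1 : is_coboundary A q.+1 (fun s => f s *+ #|T| - cores T rho f s).
  exists (inhomog (transfer_sum T rho (prism (homog f)))) => s As.
  by rewrite (res_cores_cobound cf).
apply: coboundary_ext (coboundaryD cob1 (cores_coboundary cobf)) => s _.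
by rewrite subrK.
Qed.

End Corestriction.

Section IndexKillsRestrictionKernel.
Variables (gT : finGroupType) (M : zmodType).
Implicit Types (A H : {group gT}) (f : seq gT -> M).

Lemma repr_rcoset_transversal A H : H \subset A ->
  is_transversal A H (repr @: rcosets H A) (fun y => repr (H :* y)%g).
Proof.
move=> sHA; split=> //; split.
- apply/subsetP => _ /imsetP[C /imsetP[y yA ->] ->].
  have := mem_repr_rcoset H y; rewrite rcosetE mem_rcoset => yH.
  by rewrite -(mulgKV y (repr _)) groupM // (subsetP sHA).
- by move=> y yA; apply: imset_f; rewrite -rcosetE imset_f.
- move=> y yA; rewrite /hpart; have := mem_repr_rcoset H y.
  by rewrite mem_rcoset => /groupVr; rewrite invMg invgK.
- by move=> h y hH yA /=; rewrite rcosetM (rcoset_id hH).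
- by move=> _ /imsetP[C /imsetP[y yA ->] ->]; rewrite rcosetE rcoset_repr.
Qed.

Lemma card_repr_rcosets A H : H \subset A -> #|repr @: rcosets H A| = #|A : H|%g.
Proof.
move=> sHA; rewrite card_in_imset // => _ _ /imsetP[y yA ->] /imsetP[z zA ->].
by rewrite !rcosetE => eq_repr; rewrite -rcoset_repr eq_repr rcoset_repr.
Qed.

Lemma coboundary_indexMn A H q f : H \subset A ->
  is_cocycle A q.+1 f -> is_coboundary H q.+1 f ->
  is_coboundary A q.+1 (fun s => f s *+ #|A : H|%g).
Proof.
move=> sHA; rewrite -card_repr_rcosets //.
exact: (coboundary_transversal_card (repr_rcoset_transversal sHA) (f := f)).
Qed.

Lemma coboundary_orderMn A q f : is_cocycle A q.+1 f ->
  is_coboundary A q.+1 (fun s => f s *+ #|A|%g).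
Proof.
move=> cf; rewrite -indexg1; apply: coboundary_indexMn (sub1G A) (cf) _.
apply: coboundary_ext (coboundary_const [1 gT]%G (ltn0Sn q) cf) => s [sz_s s1].
congr f; apply: (@eq_from_nth _ 1%g); rewrite ?size_nseq // => i lt_is.
by rewrite nth_nseq lt_is; apply/esym/set1P/(allP s1)/mem_nth; rewrite sz_s.
Qed.

Lemma coboundary_coprime_index A H1 H2 q f :
  H1 \subset A -> H2 \subset A -> coprime #|A : H1|%g #|A : H2|%g ->
  is_cocycle A q.+1 f -> is_coboundary H1 q.+1 f -> is_coboundary H2 q.+1 f ->
  is_coboundary A q.+1 f.
Proof.
move=> sH1A sH2A co_idx cf cob1 cob2.
by apply: (coboundary_coprime co_idx); apply: coboundary_indexMn.
Qed.

(* The cochain maps x |-> x and x |-> x g are homotopic through the prism operator. *)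
Lemma coboundary_conj_cochain (A : {group gT}) (B : {set gT}) q f g :
  is_cocycle A q.+1 f -> g \in A -> B \subset A ->
  is_coboundary B q.+1 (fun s => conj_cochain g f s - f s).
Proof.
move=> cf Ag sBA; pose mulg_r := fun z => (z * g)%g.
exists (inhomog (fun y => prism (homog f) y (map mulg_r y))) => s Bs.
have [sz_s As] := tuple_inS sBA Bs.
rewrite -(hdiff_partial_prods (A := [set: gT])); first last.
- by split=> //; apply/allP => z _; rewrite inE.
- move=> h y _ _ /=.
  have -> : map mulg_r (map ( *%g h) y) = map ( *%g h) (map mulg_r y).
    by rewrite -!map_comp; apply: eq_map => z /=; rewrite /mulg_r mulgA.
  by apply: prism_map => w; rewrite /homog steps_mulg.
rewrite -hdiff2_mapr.
have -> : conj_cochain g f s = homog f (map mulg_r (partial_prods s)).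
  by rewrite /homog steps_mulgr partial_prodsK.
rewrite -(inhomog_homog f s) /inhomog -prism_homotopy ?size_map //.
rewrite (prism_eq0 (P := mem A)) ?addr0 ?size_map ?all_partial_prods //.
- move=> w sz_w Aw; rewrite (@hdiff_homog _ _ _ q.+1); last by rewrite sz_w size_partial_prods sz_s.
  by apply: cf; split; [rewrite size_steps sz_w size_partial_prods sz_s | apply: all_steps].
apply/allP => _ /mapP[z zs ->]; apply: groupM => //.
exact: (allP (all_partial_prods As)).
Qed.

End IndexKillsRestrictionKernel.

Section Bicyclic.
Variable gT : finGroupType.
Local Open Scope group_scope.

Lemma bicyclicP (A : {group gT}) : bicyclic A <-> abelian A /\ ('r(A) <= 2)%N.
Proof.
split.
- case=> [cycA | [B [C [cycB cycC dA]]]].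
    split; first exact: cyclic_abelian.
    by case/cyclicP: cycA => x ->; rewrite rank_cycle; case: (x != 1).
  have [_ eBC cBC _] := dprodP dA.
  case/cyclicP: cycB => x eB; case/cyclicP: cycC => y eC.
  have cA : abelian A by rewrite -eBC abelianM cBC andbT eB eC !cycle_abelian.
  split=> //; rewrite -grank_abelian //.
  have -> : A = <<[set x; y]>>%G.
    apply/val_inj/eqP; rewrite /= eqEsubset gen_subG; apply/andP; split.
      by rewrite -eBC eB eC mul_subG // cycle_subG mem_gen // !inE eqxx ?orbT.
    apply/subsetP => z; rewrite !inE -eBC => /orP[] /eqP ->.
      by rewrite -(mulg1 x) mem_mulg ?group1 // eB cycle_id.
    by rewrite -(mul1g y) mem_mulg ?group1 // eC cycle_id.
  by rewrite (leq_trans (grank_min _)) // cards2; case: (x != y).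
- case=> cA rA; have [b defA ob] := abelian_structure cA.
  have sz_b : (size b <= 2)%N by rewrite -(size_map order) ob size_abelian_type.
  case: b defA ob sz_b => [|x [|y [|z b]]] //= defA _ _.
  + by left; rewrite -defA big_nil cyclic1.
  + by left; rewrite -defA big_seq1 cycle_cyclic.
  + right; exists <[x]>%G, <[y]>%G; split; rewrite ?cycle_cyclic //.
    by rewrite -defA big_cons big_seq1.
Qed.

Lemma bicyclicS (A B : {group gT}) : B \subset A -> bicyclic A -> bicyclic B.
Proof.
move=> sBA /bicyclicP[cA rA]; apply/bicyclicP; split; first exact: abelianS cA.
exact: leq_trans (rankS sBA) rA.
Qed.

Lemma bicyclic_morphim (D A : {group gT}) (f : {morphism D >-> gT}) :
  A \subset D -> bicyclic A -> bicyclic (f @* A)%G.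
Proof.
move=> sAD /bicyclicP[cA rA]; apply/bicyclicP; split; first exact: morphim_abelian.
rewrite -grank_abelian ?morphim_abelian //.
by rewrite (leq_trans (morphim_grank _ sAD)) // grank_abelian.
Qed.

End Bicyclic.

Lemma in_BD (gT : finGroupType) (M : zmodType) (G : {group gT}) q (f1 f2 : seq gT -> M) :
  in_B G q f1 -> in_B G q f2 -> in_B G q (fun s => f1 s + f2 s).
Proof. by move=> f1B f2B A sAG bA; apply: coboundaryD; [apply: f1B | apply: f2B]. Qed.

Lemma in_BMz (gT : finGroupType) (M : zmodType) (G : {group gT}) q (f : seq gT -> M) k :
  in_B G q f -> in_B G q (fun s => f s *~ k).
Proof. by move=> fB A sAG bA; apply/coboundaryMz/fB. Qed.

Lemma in_BMn (gT : finGroupType) (M : zmodType) (G : {group gT}) q (f : seq gT -> M) k :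
  in_B G q f -> in_B G q (fun s => f s *+ k).
Proof. by move=> fB A sAG bA; apply/coboundaryMn/fB. Qed.

Lemma fixed_byMz (gT : finGroupType) (M : zmodType) (N G0 : {group gT}) q
    (f : seq gT -> M) k :
  fixed_by N G0 q f -> fixed_by N G0 q (fun s => f s *~ k).
Proof.
move=> fixf g gG0; apply: coboundary_ext (coboundaryMz k (fixf g gG0)) => s _.
by rewrite mulrzBl.
Qed.

Lemma bezout_mulrzE (M : zmodType) (x : M) (u v : int) (n m : nat) :
  u * n%:Z + v * m%:Z = 1 -> x *~ v *+ m - x = (x *+ n) *~ (- u).
Proof.
move=> Duv; have -> : x *~ v *+ m = x *~ (v * m%:Z) by rewrite pmulrn mulrzA_C mulrC.
have -> : (x *+ n) *~ (- u) = x *~ (- (u * n%:Z)) by rewrite pmulrn mulrzA_C mulNr.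
by rewrite -{2}(mulr1z x) -Duv -mulrzBr opprD addrCA subrr addr0.
Qed.

Section SemidirectProduct.
Variables (gT : finGroupType) (M : zmodType) (G N G0 : {group gT}).
Hypothesis sdG : (N ><| G0)%g = G.
Implicit Types (b c f : seq gT -> M) (s : seq gT).

Local Notation rho := (remgr N G0).

Definition inflate c : seq gT -> M := fun s => c (map rho s).

Fact sdprod_normal : (N <| G)%g. Proof. by have [] := sdprod_context sdG. Qed.
Fact sdprod_subl : N \subset G. Proof. exact: normal_sub sdprod_normal. Qed.
Fact sdprod_subr : G0 \subset G. Proof. by have [] := sdprod_context sdG. Qed.

Lemma mem_rho y : y \in G -> rho y \in G0.
Proof. by move=> yG; apply: mem_remgr; have [_ _ ->] := sdprod_context sdG. Qed.

Lemma rho_id t : t \in G0 -> rho t = t.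
Proof. by have [_ _ _ _ tiNG0] := sdprod_context sdG; apply: remgr_id. Qed.

Lemma rhoM : {in G &, {morph rho : x y / x * y}%g}.
Proof. exact: remgrM (sdprod_compl sdG) sdprod_normal. Qed.

Lemma rho_transversal : is_transversal G N G0 rho.
Proof.
have [_ sG0G eNG0 _ _] := sdprod_context sdG.
split; first exact: sdprod_subl; split=> //.
- exact: mem_rho.
- by move=> y yG; apply: mem_divgr; rewrite eNG0.
- by move=> h y hN yG; rewrite remgrMl.
- exact: rho_id.
Qed.

Lemma all_map_rho (A : {set gT}) s : A \subset G -> all (mem A) s -> all (mem G0) (map rho s).
Proof.
move=> sAG As; apply/allP => _ /mapP[z zs ->]; apply: mem_rho.
exact: (subsetP sAG) (allP As z zs).
Qed.

Lemma map_rho_id s : all (mem G0) s -> map rho s = s.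
Proof. by move=> G0s; rewrite -[RHS]map_id; apply/eq_in_map => z zs; apply/rho_id/(allP G0s). Qed.

Lemma map_rho_N s : all (mem N) s -> map rho s = nseq (size s) 1%g.
Proof. by elim: s => //= z s IHs /andP[zN Ns]; rewrite remgr1 // IHs. Qed.

Lemma cobound_inflate q c s : tuple_in G q.+1 s ->
  cobound q (inflate c) s = cobound q c (map rho s).
Proof. by move=> [sz_s Gs]; apply: (cobound_map _ rhoM Gs sz_s). Qed.

Lemma inflate_cocycle q c : is_cocycle G0 q.+1 c -> is_cocycle G q.+1 (inflate c).
Proof.
move=> cc s Gs; rewrite cobound_inflate //; apply: cc.
by have [sz_s Gs'] := Gs; split; rewrite ?size_map ?(all_map_rho (subxx _)).
Qed.

Lemma inflate_in_B q c : in_B G0 q.+1 c -> in_B G q.+1 (inflate c).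
Proof.
move=> cB A sAG bA; pose pi : {morphism G >-> gT} := Morphism rhoM.
have sPA : (pi @* A \subset G0)%g.
  by apply/subsetP => _ /morphimP[x xG xA ->]; apply: mem_rho.
have [g Dg] := cB (pi @* A)%G sPA (bicyclic_morphim pi sAG bA).
exists (inflate g) => s As; have [sz_s As'] := As.
rewrite cobound_inflate; last exact: tuple_inS sAG As.
apply: Dg; split; rewrite ?size_map //.
apply/allP => _ /mapP[z zs ->]; apply: (@mem_morphim _ _ G pi).
  exact: (subsetP sAG) (allP As' z zs).
exact: (allP As').
Qed.

Lemma inflate_res_N q c : is_cocycle G0 q.+1 c -> is_coboundary N q.+1 (inflate c).
Proof.
move=> cc; apply: coboundary_ext (coboundary_const N (ltn0Sn q) cc) => s [sz_s Ns].
by rewrite /inflate map_rho_N // sz_s.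
Qed.

Lemma cores_res_N b s : all (mem N) s ->
  cores G0 rho b s = \sum_(t in G0) conj_cochain t^-1 b s.
Proof.
have [nsNG _ _ nNG0 _] := sdprod_context sdG.
move=> Ns; rewrite /cores /inhomog /cores_homog /transfer_sum; apply: eq_bigr => t tG0.
rewrite /homog /conj_cochain -[in RHS](partial_prodsK s) -steps_conjg; congr (b (steps _)).
apply/eq_in_map => z zs; have zN : z \in N := allP (all_partial_prods Ns) z zs.
have zJ : (z ^ t^-1 \in N)%g by rewrite memJ_norm // (subsetP nNG0) // groupV.
have D_tz : (t * z = z ^ t^-1 * t)%g by rewrite /conjg invgK !mulgA mulgKV.
by rewrite /hpart D_tz remgrMl // rho_id // mulgK.
Qed.

(* On N the corestriction is the sum of the G0-conjugates of b, each cohomologous to b. *)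
Lemma coboundary_cores_res_N q b : fixed_by N G0 q b ->
  is_coboundary N q (fun s => cores G0 rho b s - b s *+ #|G0|).
Proof.
move=> fixb; have cob_sum : is_coboundary N q
    (fun s => \sum_(t in G0) (conj_cochain t^-1 b s - b s)).
  by apply: coboundary_sum => t tG0; apply/fixb/groupVr.
by apply: coboundary_ext cob_sum => s [_ Ns]; rewrite sumrB sumr_const cores_res_N.
Qed.

Lemma cores_res_G0 q b : is_cocycle N q.+1 b -> is_coboundary G0 q.+1 (cores G0 rho b).
Proof.
move=> cb; apply: coboundary_ext (coboundaryMn #|G0| (coboundary_const G0 (ltn0Sn q) cb)).
move=> s [sz_s G0s]; rewrite /cores /inhomog /cores_homog /transfer_sum -sumr_const.
apply: eq_bigr => t tG0; have G0ps := all_partial_prods G0s.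
have -> : map (fun z => hpart rho (t * z)%g) (partial_prods s) = nseq q.+2 1%g.
  rewrite -sz_s -size_partial_prods; elim: (partial_prods s) G0ps => //= z r IHr.
  by case/andP=> zG0 G0r; rewrite IHr // /hpart rho_id ?groupM // mulgV.
by rewrite /homog steps_nseq1.
Qed.


Fact index_sdprodl : #|G : G0|%g = #|N|.
Proof.
apply/eqP; rewrite -(eqn_pmul2l (cardG_gt0 G0)) Lagrange ?sdprod_subr //.
by rewrite -(sdprod_card sdG) mulnC.
Qed.

Hypothesis coNG0 : coprime #|N| #|G0|.

Lemma coprime_card_index (A : {group gT}) : A \subset G -> coprime #|N| #|A : A :&: N|%g.
Proof.
move=> sAG; have nNA : A \subset 'N(N)%g := subset_trans sAG (normal_norm sdprod_normal).
rewrite indexgI -card_quotient //; apply: coprime_dvdr _ coNG0.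
rewrite (index_sdprod sdG) -card_quotient ?normal_norm ?sdprod_normal //.
exact: cardSg (quotientS N sAG).
Qed.

(* On a bicyclic A, the class of the corestriction is killed by |N| (already on G) and by
   [A : A :&: N], since on the bicyclic A :&: N it is |G0| times the trivial class of b. *)
Lemma cores_in_B q b : is_cocycle N q.+1 b -> in_B N q.+1 b -> fixed_by N G0 q.+1 b ->
  in_B G q.+1 (cores G0 rho b).
Proof.
move=> cb bB fixb A sAG bA; apply: (coboundary_coprime (coprime_card_index sAG)).
  have cobN := cores_coboundary rho_transversal (coboundary_orderMn cb).
  by apply/(coboundaryS sAG)/(coboundary_ext _ cobN) => s _; rewrite coresMn.
have sANA := subsetIl A N; have sANN := subsetIr A N.
have cobAN : is_coboundary (A :&: N)%G q.+1 b := bB _ sANN (bicyclicS sANA bA).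
apply: coboundary_indexMn sANA (cocycleS sAG (cores_cocycle rho_transversal cb)) _.
apply: coboundary_ext (coboundaryD (coboundaryS sANN (coboundary_cores_res_N fixb))
                                   (coboundaryMn #|G0| cobAN)) => s _.
by rewrite subrK.
Qed.

(* With u |N| + v |G0| = 1, the preimage of (b, c) is cores (v b) + inflate (u |N| c). *)
Lemma res_B_surjective q b c :
  is_cocycle N q.+1 b -> in_B N q.+1 b -> fixed_by N G0 q.+1 b ->
  is_cocycle G0 q.+1 c -> in_B G0 q.+1 c ->
  exists a, [/\ is_cocycle G q.+1 a, in_B G q.+1 a,
                is_coboundary N q.+1 (fun s => a s - b s) &
                is_coboundary G0 q.+1 (fun s => a s - c s)].
Proof.
move=> cb bB fixb cc cB; have [u [v Duv]] := Bezoutz #|N| #|G0|.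
have {}Duv : u * #|N|%:Z + v * #|G0|%:Z = 1 by rewrite Duv /gcdz /= (eqP coNG0).
pose b' s := b s *~ v; pose c' s := c s *~ u *+ #|N|.
have cb' : is_cocycle N q.+1 b' := cocycleMz v cb.
have cc' : is_cocycle G0 q.+1 c' := cocycleMn _ (cocycleMz u cc).
exists (fun s => cores G0 rho b' s + inflate c' s); split.
- exact: cocycleD (cores_cocycle rho_transversal cb') (inflate_cocycle cc').
- apply: in_BD; first exact: cores_in_B cb' (in_BMz v bB) (fixed_byMz v fixb).
  exact/inflate_in_B/in_BMn/in_BMz.
- have cob_b : is_coboundary N q.+1 (fun s => b' s *+ #|G0| - b s).
    apply: coboundary_ext (coboundaryMz (- u) (coboundary_orderMn cb)) => s _.
    by rewrite /b' (bezout_mulrzE _ Duv).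
  apply: coboundary_ext (coboundaryD (coboundaryD (coboundary_cores_res_N (fixed_byMz v fixb))
                                                cob_b) (inflate_res_N cc')) => s _.
  by rewrite addrA subrK addrAC.
- have cob_c : is_coboundary G0 q.+1 (fun s => c' s - c s).
    apply: coboundary_ext (coboundaryMz (- v) (coboundary_orderMn cc)) => s _.
    by rewrite /c' (bezout_mulrzE _ (etrans (addrC _ _) Duv)).
  apply: coboundary_ext (coboundaryD (cores_res_G0 cb') cob_c) => s [_ G0s].
  by rewrite /inflate map_rho_id // addrA.
Qed.

End SemidirectProduct.

Theorem theorem2p6 (gT : finGroupType) (M : zmodType) (G N G0 : {group gT})
  (nNG : (N <| G)%g) (sdG : (N ><| G0)%g = G) (cop : coprime #|N| #|G0|)
  (q : nat) (hq : (0 < q)%N) :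
  (forall a : cochain gT M, is_cocycle G q a -> in_B G q a ->
     [/\ in_B N q a, fixed_by N G0 q a & in_B G0 q a]) /\
  (forall a : cochain gT M, is_cocycle G q a -> in_B G q a ->
     is_coboundary N q a -> is_coboundary G0 q a -> is_coboundary G q a) /\
  (forall b c : cochain gT M,
     is_cocycle N q b -> in_B N q b -> fixed_by N G0 q b ->
     is_cocycle G0 q c -> in_B G0 q c ->
     exists a : cochain gT M,
       [/\ is_cocycle G q a, in_B G q a,
           is_coboundary N q (fun s => a s - b s) &
           is_coboundary G0 q (fun s => a s - c s)]).
Proof.
have sNG := normal_sub nNG; have sG0G := sdprod_subr sdG.
case: q hq => // q _; split; [|split].
- move=> a ca aB; split; [exact: in_BS sNG aB | | exact: in_BS sG0G aB].
  by move=> g /(subsetP sG0G) gG; apply: coboundary_conj_cochain ca gG sNG.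
- move=> a ca _; apply: coboundary_coprime_index sNG sG0G _ ca.
  by rewrite -(index_sdprod sdG) (index_sdprodl sdG) coprime_sym.
- exact: (res_B_surjective (M := M) sdG cop).
Qed.
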